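(* Let $P_1,\dots,P_N$ be orthogonal projections on a finite-dimensional complex Hilbert space, and let $\delta\in[0,1]$, $\alpha\in[0,1]$. Suppose that for at least $\delta N^2$ of the ordered pairs $(j,\ell)\in[N]^2$ one has $\|P_jP_\ell\|_{\mathrm{op}}\le\alpha$. Then \[ \left\|\frac1N\sum_{j=1}^NP_j\right\|_{\mathrm{op}}\le1-\frac\delta2(1-\alpha). \]
   Context: $\|\cdot\|_{\mathrm{op}}$ denotes the operator norm; ordered pairs in $[N]^2$ include the diagonal pairs $(j,j)$. *)

From HB Require Import structures.
From mathcomp Require Import all_boot all_order all_algebra.
From mathcomp Require Import all_classical all_reals.
From mathcomp Require Import complex.
Set Implicit Arguments. Unset Strict Implicit. Unset Printing Implicit Defensive.
Import Order.TTheory GRing.Theory Num.Theory.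
Local Open Scope ring_scope.
Local Open Scope classical_set_scope.

(* The finite-dimensional complex Hilbert space is C^n = 'cV[R[i]]_n with the
   standard inner product <x,y> = \sum_i conj(x_i) y_i. *)

Definition vnorm (R : realType) (n : nat) (x : 'cV[R[i]]_n) : R :=
  Num.sqrt (\sum_(i < n) (Normc.normc (x i ord0)) ^+ 2).

Definition opnorm (R : realType) (n : nat) (A : 'M[R[i]]_n) : R :=
  sup [set r : R | exists x : 'cV[R[i]]_n, vnorm x <= 1 /\ r = vnorm (A *m x)].

Definition adjoint (R : realType) (n : nat) (A : 'M[R[i]]_n) : 'M[R[i]]_n :=
  map_mx (@conjc R) A^T.

Definition orth_proj (R : realType) (n : nat) (P : 'M[R[i]]_n) : Prop :=
  P *m P = P /\ adjoint P = P.

From HB Require Import structures.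
From mathcomp Require Import all_boot all_order all_algebra.
From mathcomp Require Import all_classical all_reals.
From mathcomp Require Import complex.
From mathcomp Require Import ring lra.
Import Order.TTheory GRing.Theory Num.Theory.
Local Open Scope ring_scope.

(* For a unit vector x, |sum_j P_j x|^2 = sum_(j,l) Re <x, P_j P_l x>, and
   each term is at most ||P_j P_l|| <= alpha on the good pairs and at most 1
   on the others, so |(1/N) sum_j P_j x|^2 <= 1 - delta (1 - alpha), which is
   at most (1 - delta (1 - alpha) / 2)^2. *)

Lemma Re_sum (R : realType) (I : Type) (r : seq I) (F : I -> R[i]) :
  complex.Re (\sum_(i <- r) F i) = \sum_(i <- r) complex.Re (F i).
Proof. exact: (@raddf_sum _ _ (@complex.Re R : Rcomplex R -> R)). Qed.

Section InnerProduct.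
Context {R : realType} {n : nat}.
Implicit Types (u v x : 'cV[R[i]]_n) (A P Q : 'M[R[i]]_n).

Definition dotc u v : R[i] := \sum_(k < n) (u k ord0)^*%C * v k ord0.

Definition dotr u v : R := complex.Re (dotc u v).

Lemma dotrE u v : dotr u v = \sum_(k < n)
  (complex.Re (u k ord0) * complex.Re (v k ord0)
   + complex.Im (u k ord0) * complex.Im (v k ord0)).
Proof.
rewrite /dotr /dotc Re_sum; apply: eq_bigr => k _.
by case: (u k ord0) => a b; case: (v k ord0) => c d /=; rewrite mulNr opprK.
Qed.

Lemma dotrC u v : dotr u v = dotr v u.
Proof. by rewrite !dotrE; apply: eq_bigr => k _; rewrite mulrC [_ * complex.Im _]mulrC. Qed.

Lemma dotr_suml (I : Type) (r : seq I) (F : I -> 'cV[R[i]]_n) v :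
  dotr (\sum_(j <- r) F j) v = \sum_(j <- r) dotr (F j) v.
Proof.
rewrite /dotr /dotc -Re_sum; congr complex.Re.
under eq_bigr => k _ do rewrite summxE rmorph_sum mulr_suml.
by rewrite exchange_big.
Qed.

Lemma dotr_sumr (I : Type) (r : seq I) (F : I -> 'cV[R[i]]_n) u :
  dotr u (\sum_(j <- r) F j) = \sum_(j <- r) dotr u (F j).
Proof. by rewrite dotrC dotr_suml; apply: eq_bigr => j _; rewrite dotrC. Qed.

Lemma dotr_ge0 u : 0 <= dotr u u.
Proof. by rewrite dotrE; apply: sumr_ge0 => k _; rewrite -!expr2 addr_ge0 ?sqr_ge0. Qed.

Lemma dotrZ (c : R) u : dotr (c%:C%C *: u) (c%:C%C *: u) = c ^+ 2 * dotr u u.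
Proof.
rewrite !dotrE mulr_sumr; apply: eq_bigr => k _.
by rewrite !mxE; case: (u k ord0) => a b /=; ring.
Qed.

Lemma dotr_AMGM (s : R) u v : 2 * s * dotr u v <= s ^+ 2 * dotr u u + dotr v v.
Proof.
rewrite !dotrE !mulr_sumr -big_split /=; apply: ler_sum => k _.
set a := complex.Re _; set b := complex.Im _; set c := complex.Re _; set d := complex.Im _.
have := sqr_ge0 (s * a - c); have := sqr_ge0 (s * b - d); nra.
Qed.

Lemma dotc_mulmxl A u v : dotc (A *m u) v = dotc u (adjoint A *m v).
Proof.
rewrite /dotc /adjoint.
under eq_bigr => k _ do rewrite mxE rmorph_sum mulr_suml.
rewrite exchange_big /=; apply: eq_bigr => l _.
rewrite mxE mulr_sumr; apply: eq_bigr => k _.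
by rewrite !mxE rmorphM /=; ring.
Qed.

Lemma vnormE u : vnorm u = Num.sqrt (dotr u u).
Proof.
rewrite /vnorm dotrE; congr Num.sqrt; apply: eq_bigr => k _.
by case: (u k ord0) => a b /=; rewrite sqr_sqrtr ?addr_ge0 ?sqr_ge0 // !expr2.
Qed.

Lemma vnorm_ge0 u : 0 <= vnorm u.
Proof. exact: sqrtr_ge0. Qed.

Lemma vnorm_sqr u : vnorm u ^+ 2 = dotr u u.
Proof. by rewrite vnormE sqr_sqrtr ?dotr_ge0. Qed.

Lemma vnorm0 : vnorm (0 : 'cV[R[i]]_n) = 0.
Proof. by rewrite vnormE dotrE big1 ?sqrtr0 // => k _; rewrite mxE mulr0 addr0. Qed.

Lemma vnormZ (c : R) u : vnorm (c%:C%C *: u) = `|c| * vnorm u.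
Proof. by rewrite !vnormE dotrZ sqrtrM ?sqr_ge0 // sqrtr_sqr. Qed.

Lemma dotr_le u v (a : R) : vnorm u <= 1 -> vnorm v <= a -> dotr u v <= a.
Proof.
move=> u1 va; have a0 : 0 <= a := le_trans (vnorm_ge0 v) va.
have uu : dotr u u <= 1.
  by rewrite -vnorm_sqr -(expr1n _ 2) lerXn2r ?nnegrE ?vnorm_ge0.
have vv : dotr v v <= a ^+ 2 by rewrite -vnorm_sqr lerXn2r ?nnegrE ?vnorm_ge0.
have := dotr_ge0 u; have := dotr_ge0 v.
(* AM-GM with s = a, or with s = dotr u v when a = 0 *)
have [a_gt0|a_le0] := ltP 0 a; first by have := dotr_AMGM a u v; nra.
have {}a0 : a = 0 by apply/eqP; rewrite eq_le a_le0 a0.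
by subst a; have := dotr_AMGM (dotr u v) u v; nra.
Qed.

Lemma dotr_proj P Q x : orth_proj P -> dotr (P *m x) (Q *m x) = dotr x (P *m Q *m x).
Proof. by case=> _ P_sa; rewrite /dotr dotc_mulmxl P_sa mulmxA. Qed.

Lemma vnorm_proj P x : orth_proj P -> vnorm (P *m x) <= vnorm x.
Proof.
(* P idempotent and self-adjoint: |P x|^2 = <x, P x> <= (|x|^2 + |P x|^2) / 2 *)
move=> P_proj; rewrite -ler_sqr ?nnegrE ?vnorm_ge0 // !vnorm_sqr.
have := dotr_AMGM 1 x (P *m x).
by rewrite -[in dotr x _](proj1 P_proj) -dotr_proj //; lra.
Qed.

Lemma opnorm_le A (c : R) :
  (forall x, vnorm x <= 1 -> vnorm (A *m x) <= c) -> opnorm A <= c.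
Proof.
move=> Ac; apply: ge_sup; last by move=> _ [x [x1 ->]]; exact: Ac.
by exists (vnorm (A *m 0)), 0; rewrite vnorm0 ler01.
Qed.

Lemma vnorm_le_opnorm A (c : R) x :
  (forall y, vnorm y <= 1 -> vnorm (A *m y) <= c) ->
  vnorm x <= 1 -> vnorm (A *m x) <= opnorm A.
Proof.
move=> Ac x1; apply: ub_le_sup; last by exists x.
by exists c => _ [y [y1 ->]]; exact: Ac.
Qed.

End InnerProduct.

Section AverageOfProjections.
Context {R : realType} {n N : nat} (P : 'I_N -> 'M[R[i]]_n) (alpha : R).
Hypothesis P_proj : forall j, orth_proj (P j).

Local Notation good := [set jl : 'I_N * 'I_N | opnorm (P jl.1 *m P jl.2) <= alpha].

Lemma vnorm_proj_mul j l x : vnorm x <= 1 -> vnorm (P j *m P l *m x) <= 1.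
Proof.
move=> x1; rewrite -mulmxA.
exact: le_trans (vnorm_proj _ _ (P_proj j)) (le_trans (vnorm_proj _ _ (P_proj l)) x1).
Qed.

Lemma dotr_proj_pair_le j l x : vnorm x <= 1 ->
  dotr (P j *m x) (P l *m x) <= if (j, l) \in good then alpha else 1.
Proof.
move=> x1; rewrite dotr_proj //; apply: dotr_le (x1) _.
case: ifP => [|_]; last exact: vnorm_proj_mul x1.
rewrite inE => /= jl_good; apply: le_trans jl_good.
exact: vnorm_le_opnorm (vnorm_proj_mul j l) x1.
Qed.

Lemma vnorm_sum_proj_sqr x : vnorm x <= 1 ->
  vnorm (\sum_j P j *m x) ^+ 2 <= N%:R ^+ 2 - (1 - alpha) * #|good|%:R.
Proof.
move=> x1; rewrite vnorm_sqr dotr_suml.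
under eq_bigr do rewrite dotr_sumr.
rewrite pair_bigA /=.
have -> : N%:R ^+ 2 - (1 - alpha) * #|good|%:R =
    \sum_(jl : 'I_N * 'I_N) 1 - \sum_(jl in good) (1 - alpha).
  by rewrite !sumr_const card_prod card_ord natrM expr2 !mulr_natr.
rewrite [X in _ - X]big_mkcond -sumrB /=; apply: ler_sum => -[j l] _.
by have := dotr_proj_pair_le j l x x1; case: ifP => _; lra.
Qed.

End AverageOfProjections.

Lemma averaged_norm_le {R : realType} {k g v delta alpha : R} :
  0 <= k -> 0 <= delta <= 1 -> 0 <= alpha <= 1 -> 0 <= v ->
  delta * k ^+ 2 <= g -> v ^+ 2 <= k ^+ 2 - (1 - alpha) * g ->
  k^-1 * v <= 1 - delta / 2 * (1 - alpha).
Proof.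
move=> k0 /andP[d0 d1] /andP[a0 a1] v0 dg vg.
set b := 1 - _; have b0 : 0 <= b by rewrite /b; nra.
have [->|k_gt0] := eqVneq k 0; first by rewrite invr0 mul0r.
have {}k_gt0 : 0 < k by rewrite lt_def k_gt0.
rewrite mulrC ler_pdivrMr // -ler_sqr ?nnegrE ?mulr_ge0 //.
have b2 : 1 - delta * (1 - alpha) <= b ^+ 2.
  by rewrite /b; have := sqr_ge0 (delta / 2 * (1 - alpha)); lra.
have : 0 <= k ^+ 2 * (b ^+ 2 - (1 - delta * (1 - alpha))).
  by rewrite mulr_ge0 ?sqr_ge0 ?subr_ge0.
have : 0 <= (1 - alpha) * (g - delta * k ^+ 2) by rewrite mulr_ge0 ?subr_ge0.
rewrite exprMn; nra.
Qed.

Theorem lemma4p13 (R : realType) (n N : nat) (P : 'I_N -> 'M[R[i]]_n)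
    (delta alpha : R) :
  (forall j, orth_proj (P j)) ->
  0 <= delta <= 1 -> 0 <= alpha <= 1 ->
  delta * (N%:R ^+ 2) <=
    #|[set jl : 'I_N * 'I_N | opnorm (P jl.1 *m P jl.2) <= alpha]|%:R ->
  opnorm (N%:R^-1 *: \sum_(j < N) P j) <= 1 - delta / 2 * (1 - alpha).
Proof.
move=> P_proj delta01 alpha01 many_good.
apply: opnorm_le => x x1.
have -> : (N%:R^-1 *: \sum_j P j) *m x = (N%:R^-1 : R)%:C%C *: \sum_j P j *m x.
  by rewrite -scalemxAl mulmx_suml fmorphV rmorph_nat.
rewrite vnormZ ger0_norm ?invr_ge0 //.
have sum_bound := vnorm_sum_proj_sqr P alpha P_proj x x1.
exact: averaged_norm_le (ler0n _ _) delta01 alpha01 (vnorm_ge0 _) many_good sum_bound.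
Qed.
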